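(* Let $\alpha,a,b\in\mathbb{C}$ be such that none of $\alpha+a,\alpha-a,\alpha+b,\alpha-b$ belongs to $\{0,-1,-2,\ldots\}$. Then \[ \sum_{k=0}^{\infty}\frac{k+\alpha}{((k+\alpha)^2-a^2)((k+\alpha)^2-b^2)} =\frac12\sum_{n=1}^{\infty}\frac{(-1)^{n-1}(1\pm a\pm b)_{n-1}(\alpha\pm a)_{n-1}(\alpha\pm b)_{n-1}}{n\binom{2n}{n}(\alpha\pm a)_{2n}(\alpha\pm b)_{2n}}\,q(n), \] where \[ q(n)=2(2n-1)(3n+2\alpha-3)((2n+\alpha-1)^2-a^2)((2n+\alpha-1)^2-b^2)+((n+\alpha-1)^2-a^2)((n+\alpha-1)^2-b^2)\bigl(13n^2-10n(1-\alpha)+2(1-\alpha)^2-a^2-b^2\bigr). \]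
   Context: $(x)_n=x(x+1)\cdots(x+n-1)$, $(x)_0=1$. The notation $(u\pm v\pm w)_m$ denotes $(u+v+w)_m(u+v-w)_m(u-v+w)_m(u-v-w)_m$, and $(u\pm v)_m=(u+v)_m(u-v)_m$. *)

From Stdlib Require Import Reals.
From Stdlib Require Binomial.
From Coquelicot Require Import Coquelicot.
Open Scope C_scope.

Fixpoint poch (x : C) (n : nat) : C :=
  match n with
  | O => 1
  | S m => poch x m * (x + RtoC (INR m))
  end.

Definition poch_pm (u v : C) (m : nat) : C := poch (u + v) m * poch (u - v) m.

Definition poch_pmpm (u v w : C) (m : nat) : C :=
  poch (u + v + w) m * poch (u + v - w) m * poch (u - v + w) m * poch (u - v - w) m.

Definition nonpos_int (x : C) : Prop := exists m : nat, x = RtoC (- INR m).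

Definition lhs_term (alpha a b : C) (k : nat) : C :=
  (RtoC (INR k) + alpha) /
  (((RtoC (INR k) + alpha) * (RtoC (INR k) + alpha) - a * a) *
   ((RtoC (INR k) + alpha) * (RtoC (INR k) + alpha) - b * b)).

Definition qn (alpha a b : C) (n : nat) : C :=
  let N := RtoC (INR n) in
  2 * (2 * N - 1) * (3 * N + 2 * alpha - 3)
    * ((2 * N + alpha - 1) * (2 * N + alpha - 1) - a * a)
    * ((2 * N + alpha - 1) * (2 * N + alpha - 1) - b * b)
  + ((N + alpha - 1) * (N + alpha - 1) - a * a)
    * ((N + alpha - 1) * (N + alpha - 1) - b * b)
    * (13 * N * N - 10 * N * (1 - alpha) + 2 * (1 - alpha) * (1 - alpha) - a * a - b * b).

(* summand of the right-hand series at index n >= 1 (without the factor 1/2) *)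
Definition rhs_term (alpha a b : C) (n : nat) : C :=
  (RtoC ((-1) ^ (n - 1)) * poch_pmpm 1 a b (n - 1)
     * poch_pm alpha a (n - 1) * poch_pm alpha b (n - 1))
  / (RtoC (INR n) * RtoC (Binomial.C (2 * n) n)
     * poch_pm alpha a (2 * n) * poch_pm alpha b (2 * n))
  * qn alpha a b n.

From Stdlib Require Import Reals Lia Lra.
From Coquelicot Require Import Coquelicot.
Open Scope C_scope.

(* A Markov-WZ summation.  Put Q(y) = (y^2-a^2)(y^2-b^2), W(y,m) = Q(y)Q(y+1)...Q(y+m-1),
   s(n) = (-1)^n (1+-a+-b)_n / C(2n,n) (quartic, quartic_prod, wz_s below) and
     F(n,k) = s(n) (alpha+k+3n/2) / W(alpha+k+n, n+1),
     G(n,k) = s(n) q(n+1) / (4(2n+1) W(alpha+k+n, n+2)),  q taken at alpha+k.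
   Then F(n+1,k) - F(n,k) = G(n,k+1) - G(n,k), F(0,k) is the k-th term of the left
   series and G(n,0) half the (n+1)-th term of the right one.  Summing the identity over
   k < K and n < N, and letting K -> oo (G(n,K) = O(1/K)), gives
     sum_k F(0,k) = sum_(n<N) G(n,0) + sum_k F(N,k),
   and the last series tends to 0 because |F(N+1,k)| <= |F(N,k)|/2 for all large N. *)

(** * Elementary estimates *)

Lemma RtoC_INR_S (n : nat) : RtoC (INR (S n)) = RtoC (INR n) + 1.
Proof. now rewrite S_INR, RtoC_plus. Qed.

Lemma RtoC_INR_plus (n m : nat) : RtoC (INR (n + m)) = RtoC (INR n) + RtoC (INR m).
Proof. now rewrite plus_INR, RtoC_plus. Qed.

Lemma RtoC_neq_0 (r : R) : r <> 0%R -> RtoC r <> 0.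
Proof. intros Hr E. apply Hr, RtoC_inj, E. Qed.

Lemma RtoC_affine_INR_neq_0 (p q : R) (n : nat) :
  (0 <= p)%R -> (0 < q)%R -> RtoC p * RtoC (INR n) + RtoC q <> 0.
Proof.
  intros Hp Hq. rewrite <- RtoC_mult, <- RtoC_plus. apply RtoC_neq_0.
  pose proof (pos_INR n). nra.
Qed.

Lemma RtoC_INR_S_neq_0 (n : nat) : RtoC (INR n) + 1 <> 0.
Proof. rewrite <- RtoC_INR_S. apply RtoC_neq_0, not_0_INR. lia. Qed.

Lemma Cmod_minus_le (x y : C) : (Cmod (x - y) <= Cmod x + Cmod y)%R.
Proof. eapply Rle_trans; [apply Cmod_triangle|]. rewrite Cmod_opp. lra. Qed.

Lemma Cmod_plus_real_le (u : C) (c r : R) :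
  (Cmod u <= c)%R -> (0 <= r)%R -> (Cmod (u + RtoC r) <= r + c)%R.
Proof.
  intros Hu Hr. eapply Rle_trans; [apply Cmod_triangle|].
  rewrite Cmod_R, Rabs_pos_eq; lra.
Qed.

Lemma Cmod_plus_real_ge (u : C) (c r : R) :
  (Cmod u <= c)%R -> (r - c <= Cmod (u + RtoC r))%R.
Proof.
  intros Hu. pose proof (Cmod_triangle (u + RtoC r) (- u)) as T.
  replace (u + RtoC r + - u) with (RtoC r) in T by ring.
  rewrite Cmod_R, Cmod_opp in T. pose proof (Rle_abs r). lra.
Qed.

Lemma Cmod_affine_le (p q : C) (t : R) : (0 <= t)%R ->
  (Cmod (p + q * RtoC t) <= (t + 1) * (Cmod p + Cmod q))%R.
Proof.
  intros Ht. pose proof (Cmod_ge_0 p). pose proof (Cmod_ge_0 q).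
  eapply Rle_trans; [apply Cmod_triangle|].
  rewrite Cmod_mult, Cmod_R, Rabs_pos_eq by lra. nra.
Qed.

Lemma Cmod_quadratic_le (c2 c1 c0 x : C) (A t : R) : (0 <= t)%R ->
  (Cmod x <= (t + 1) * A)%R ->
  (Cmod (c2 * x * x + c1 * x + c0) <=
   (t + 1) ^ 2 * (Cmod c2 * A ^ 2 + Cmod c1 * A + Cmod c0))%R.
Proof.
  intros Ht Hx. pose proof (Cmod_ge_0 x).
  pose proof (Cmod_ge_0 c2). pose proof (Cmod_ge_0 c1). pose proof (Cmod_ge_0 c0).
  assert (HA : (0 <= A)%R) by nra.
  assert (Hx2 : (Cmod x * Cmod x <= (t + 1) ^ 2 * A ^ 2)%R)
    by (replace ((t + 1) ^ 2 * A ^ 2)%R with ((t + 1) * A * ((t + 1) * A))%R by ring;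
        apply Rmult_le_compat; lra).
  eapply Rle_trans; [apply Cmod_triangle|].
  eapply Rle_trans; [apply Rplus_le_compat_r, Cmod_triangle|].
  rewrite !Cmod_mult.
  assert (Ht2 : (t + 1 <= (t + 1) ^ 2)%R) by (simpl; nra).
  assert (Ht1 : (1 <= (t + 1) ^ 2)%R) by lra.
  assert (Cmod c1 * Cmod x <= (t + 1) ^ 2 * (Cmod c1 * A))%R.
  { apply Rle_trans with (Cmod c1 * ((t + 1) * A))%R; [apply Rmult_le_compat_l; lra|].
    assert (0 <= Cmod c1 * A)%R by nra. nra. }
  assert (Cmod c0 <= (t + 1) ^ 2 * Cmod c0)%R by nra.
  assert (Cmod c2 * Cmod x * Cmod x <= (t + 1) ^ 2 * (Cmod c2 * A ^ 2))%R.
  { rewrite Rmult_assoc. apply Rle_trans with (Cmod c2 * ((t + 1) ^ 2 * A ^ 2))%R; [|lra].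
    apply Rmult_le_compat_l; lra. }
  lra.
Qed.

Lemma Rmult4_le_compat (x1 x2 x3 x4 y1 y2 y3 y4 : R) :
  (0 <= x1)%R -> (0 <= x2)%R -> (0 <= x3)%R -> (0 <= x4)%R ->
  (x1 <= y1)%R -> (x2 <= y2)%R -> (x3 <= y3)%R -> (x4 <= y4)%R ->
  (x1 * x2 * x3 * x4 <= y1 * y2 * y3 * y4)%R.
Proof.
  intros. apply Rmult_le_compat; try lra.
  - apply Rmult_le_pos; [apply Rmult_le_pos|]; lra.
  - apply Rmult_le_compat; try lra; [apply Rmult_le_pos; lra|].
    apply Rmult_le_compat; lra.
Qed.

Lemma inv_consec_bound (t X D Q R0 : R) : (0 <= t)%R -> (0 <= X)%R -> (X <= (t + 1) * D)%R ->
  ((t + 2) ^ 4 <= Q)%R -> (1 <= R0)%R -> (X / (Q * R0) <= D * / ((t + 1) * (t + 2)))%R.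
Proof.
  intros Ht HX HXD HQ HR.
  assert (P4 : (0 < (t + 2) ^ 4)%R) by (apply pow_lt; lra).
  assert (HD : (0 <= D)%R) by nra.
  apply Rle_trans with ((t + 1) * D / (t + 2) ^ 4)%R.
  - unfold Rdiv. apply Rmult_le_compat; try lra.
    + left. apply Rinv_0_lt_compat. nra.
    + apply Rinv_le_contravar; nra.
  - apply (Rmult_le_reg_r ((t + 2) ^ 4 * (t + 1))); [nra|].
    replace ((t + 1) * D / (t + 2) ^ 4 * ((t + 2) ^ 4 * (t + 1)))%R
      with (D * ((t + 1) * (t + 1)))%R by (field; lra).
    replace (D * / ((t + 1) * (t + 2)) * ((t + 2) ^ 4 * (t + 1)))%R
      with (D * (t + 2) ^ 3)%R by (field; lra).
    apply Rmult_le_compat_l; [exact HD|]. simpl. nra.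
Qed.

Lemma Rdiv_le_decay (x D E t : R) (p : nat) : (0 <= t)%R -> (0 <= x)%R -> (p <= 3)%nat ->
  (x <= (t + 1) ^ p * E)%R -> (((t + 1) / 2) ^ 4 <= D)%R -> (x / D <= 16 * E / (t + 1))%R.
Proof.
  intros Ht Hx Hp HxE HD.
  assert (Hpow : (0 < ((t + 1) / 2) ^ 4)%R) by (apply pow_lt; lra).
  assert (Hp3 : ((t + 1) ^ p <= (t + 1) ^ 3)%R) by (apply Rle_pow; lia || lra).
  assert (HE : (0 <= E)%R).
  { pose proof (pow_lt (t + 1) p ltac:(lra)).
    destruct (Rle_or_lt 0 E); [assumption|nra]. }
  unfold Rdiv. apply Rle_trans with ((t + 1) ^ 3 * E * / ((t + 1) / 2) ^ 4)%R.
  - apply Rmult_le_compat; try nra.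
    + left. apply Rinv_0_lt_compat. lra.
    + apply Rinv_le_contravar; lra.
  - right. field. lra.
Qed.

Lemma Cmod_split_ratio_le (l u Q0 Q2 Rm : C) (t E1 E2 : R) : (0 <= t)%R ->
  (Cmod l <= (t + 1) ^ 1 * E1)%R -> (Cmod u <= (t + 1) ^ 2 * E2)%R ->
  (((t + 1) / 2) ^ 4 <= Cmod Q0)%R -> (((t + 1) / 2) ^ 4 <= Cmod Q2)%R -> (1 <= Cmod Rm)%R ->
  (Cmod ((l * Q2 + Q0 * u) / (Q0 * Rm * Q2)) <= 16 * E1 / (t + 1) + 16 * E2 / (t + 1))%R.
Proof.
  intros Ht Hl Hu H0 H2 HR.
  assert (Hpow : (0 < ((t + 1) / 2) ^ 4)%R) by (apply pow_lt; lra).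
  assert (Q0 <> 0) by (intro E; rewrite E, Cmod_0 in H0; lra).
  assert (Q2 <> 0) by (intro E; rewrite E, Cmod_0 in H2; lra).
  assert (Rm <> 0) by (intro E; rewrite E, Cmod_0 in HR; lra).
  replace ((l * Q2 + Q0 * u) / (Q0 * Rm * Q2)) with ((l / Q0 + u / Q2) / Rm)
    by (field; repeat split; assumption).
  rewrite Cmod_div by assumption.
  pose proof (Cmod_ge_0 (l / Q0 + u / Q2)).
  apply Rle_trans with (Cmod (l / Q0 + u / Q2)).
  { unfold Rdiv. rewrite <- (Rmult_1_r (Cmod (l / Q0 + u / Q2))) at 2.
    apply Rmult_le_compat_l; [lra|]. rewrite <- Rinv_1. apply Rinv_le_contravar; lra. }
  eapply Rle_trans; [apply Cmod_triangle|].
  rewrite !Cmod_div by assumption.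
  apply Rplus_le_compat;
    (eapply Rdiv_le_decay; [exact Ht|apply Cmod_ge_0| |eassumption|assumption]); lia.
Qed.

Lemma halving_combine (s A n1 n0 m q0 q2 q3 P Z : R) :
  (0 <= s)%R -> (0 <= A)%R -> (0 <= n1)%R -> (0 < m)%R -> (0 < q0)%R -> (0 < Z)%R ->
  (A <= P / 2)%R -> (n1 <= 2 * n0)%R -> (q0 <= q2)%R -> (Z <= q3)%R -> (P <= Z / 2)%R ->
  (s * A * n1 / (m * q2 * q3) <= / 2 * (s * n0 / (q0 * m)))%R.
Proof.
  intros Hs HA Hn1 Hm Hq0 HZ HAP Hn HQ HZq HPZ.
  assert (Hden : (/ (m * q2 * q3) <= / (m * q0 * Z))%R).
  { apply Rinv_le_contravar; [apply Rmult_lt_0_compat; [apply Rmult_lt_0_compat|]; lra|].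
    apply Rmult_le_compat; [| | apply Rmult_le_compat_l|]; nra. }
  assert (Hnum : (A * n1 <= Z * n0 / 2)%R).
  { assert (A * n1 <= P / 2 * (2 * n0))%R by (apply Rmult_le_compat; lra). nra. }
  unfold Rdiv. apply Rle_trans with (s * A * n1 * / (m * q0 * Z))%R.
  - apply Rmult_le_compat_l; [apply Rmult_le_pos; [apply Rmult_le_pos|]; lra|exact Hden].
  - apply Rle_trans with (s * (Z * n0 / 2) * / (m * q0 * Z))%R.
    + rewrite (Rmult_assoc s). apply Rmult_le_compat_r.
      * left. apply Rinv_0_lt_compat. apply Rmult_lt_0_compat; [apply Rmult_lt_0_compat|]; lra.
      * apply Rmult_le_compat_l; lra.
    + right. field. repeat split; lra.
Qed.

Lemma quartic_halving_margin (N r : R) : (0 <= r)%R -> (5 * r + 2 <= N)%R ->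
  ((N + 1 + r) ^ 4 <= (2 * N + 2 - r) ^ 4 / 2)%R.
Proof.
  intros Hr HN.
  apply Rle_trans with ((2 / 3 * (2 * N + 2 - r)) ^ 4)%R.
  - apply pow_incr. lra.
  - rewrite Rpow_mult_distr.
    assert (0 <= (2 * N + 2 - r) ^ 4)%R by (apply pow_le; lra).
    simpl. nra.
Qed.

Lemma binomial_central_pos (n : nat) : (0 < Binomial.C (2 * n) n)%R.
Proof.
  unfold Binomial.C. apply Rdiv_lt_0_compat; [apply INR_fact_lt_0|].
  apply Rmult_lt_0_compat; apply INR_fact_lt_0.
Qed.

Lemma binomial_central_succ (n : nat) :
  RtoC (Binomial.C (2 * S n) (S n)) =
  RtoC (Binomial.C (2 * n) n) * ((2 * RtoC (INR n) + 1) * (2 * RtoC (INR n) + 2))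
  / ((RtoC (INR n) + 1) * (RtoC (INR n) + 1)).
Proof.
  assert (HR : (Binomial.C (2 * S n) (S n) * ((INR n + 1) * (INR n + 1)) =
                Binomial.C (2 * n) n * ((2 * INR n + 1) * (2 * INR n + 2)))%R).
  { unfold Binomial.C.
    replace (2 * S n - S n)%nat with (S n) by lia.
    replace (2 * n - n)%nat with n by lia.
    replace (2 * S n)%nat with (S (S (2 * n))) by lia.
    rewrite !fact_simpl, !mult_INR, !S_INR, mult_INR.
    pose proof (INR_fact_neq_0 n). pose proof (INR_fact_neq_0 (2 * n)).
    pose proof (pos_INR n). simpl (INR 2). field. lra. }
  apply (f_equal RtoC) in HR. rewrite !RtoC_mult, !RtoC_plus, !RtoC_mult in HR.
  rewrite <- HR. field. apply RtoC_INR_S_neq_0.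
Qed.

(** * Sequences and series in C *)

Lemma filterlim_C_seq_spec (u : nat -> C) (l : C) :
  filterlim u eventually (locally l) <->
  forall eps, (0 < eps)%R ->
    exists N, forall n, (N <= n)%nat -> (Cmod (u n - l) < eps)%R.
Proof.
  rewrite (@filterlim_locally_ball_norm C_AbsRing nat C_NormedModule _ _).
  split.
  - intros H eps Heps. destruct (H (mkposreal eps Heps)) as [N HN].
    exists N. intros n Hn. exact (HN n Hn).
  - intros H eps. destruct (H eps (cond_pos eps)) as [N HN]. exists N. intros n Hn. exact (HN n Hn).
Qed.

Lemma filterlim_C_plus (u v : nat -> C) (l m : C) :
  filterlim u eventually (locally l) -> filterlim v eventually (locally m) ->
  filterlim (fun n => u n + v n) eventually (locally (l + m)).
Proof.
  intros Hu Hv.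
  exact (filterlim_comp_2 u v Cplus Hu Hv (@filterlim_plus C_AbsRing C_NormedModule l m)).
Qed.

Fixpoint psum (f : nat -> C) (K : nat) : C :=
  match K with O => 0 | S K' => psum f K' + f K' end.

Lemma sum_n_psum (f : nat -> C) (K : nat) : sum_n f K = psum f (S K).
Proof.
  induction K as [|K IH].
  - rewrite sum_O. simpl. symmetry. apply Cplus_0_l.
  - rewrite sum_Sn, IH. reflexivity.
Qed.

Lemma sum_n_Cmod_le (f : nat -> C) (c : nat -> R) :
  (forall k, Cmod (f k) <= c k)%R -> forall K, (Cmod (sum_n f K) <= sum_n c K)%R.
Proof.
  intros Hfc K. induction K as [|K IH].
  - rewrite !sum_O. apply Hfc.
  - rewrite !sum_Sn. eapply Rle_trans; [apply Cmod_triangle|].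
    specialize (Hfc (S K)). change (plus (sum_n c K) (c (S K))) with (sum_n c K + c (S K))%R. lra.
Qed.

Lemma is_series_Cmod_le (f : nat -> C) (c : nat -> R) (T : C) (S : R) :
  (forall k, Cmod (f k) <= c k)%R -> is_series f T -> is_series c S -> (Cmod T <= S)%R.
Proof.
  intros Hfc HT Hc.
  apply (is_lim_seq_le (fun K => Cmod (sum_n f K)) (sum_n c) (Cmod T) S).
  - apply sum_n_Cmod_le, Hfc.
  - exact (filterlim_comp _ _ _ (sum_n f) Cmod _ _ _ HT (filterlim_norm T)).
  - exact Hc.
Qed.

Definition inv_consec (k : nat) : R := / ((INR k + 1) * (INR k + 2)).

Lemma sum_n_inv_consec (K : nat) : @eq R (sum_n inv_consec K) (1 - / (INR K + 2))%R.
Proof.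
  induction K as [|K IH].
  - rewrite sum_O. unfold inv_consec. simpl. field.
  - rewrite sum_Sn, IH. unfold inv_consec. rewrite S_INR.
    change plus with Rplus. pose proof (pos_INR K). field. lra.
Qed.

Lemma is_series_inv_consec : is_series inv_consec 1%R.
Proof.
  change (is_lim_seq (sum_n inv_consec) 1%R).
  apply (is_lim_seq_ext (fun K => 1 - / (INR K + 2))%R).
  { intros K. symmetry. apply sum_n_inv_consec. }
  replace (Finite 1) with (Rbar_minus 1 0) by (simpl; f_equal; ring).
  apply is_lim_seq_minus'; [apply is_lim_seq_const|].
  replace (Finite 0) with (Rbar_inv p_infty) by reflexivity.
  apply is_lim_seq_inv; [|discriminate].
  eapply is_lim_seq_plus; [apply is_lim_seq_INR|apply is_lim_seq_const|reflexivity].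
Qed.

Lemma filterlim_of_geometric_remainder (u : nat -> C) (L : C) (N0 : nat) (B : R) :
  (forall j, exists T, u (N0 + j)%nat = L - T /\ (Cmod T <= (/ 2) ^ j * B)%R) ->
  filterlim u eventually (locally L).
Proof.
  intros Hu. apply filterlim_C_seq_spec. intros eps Heps.
  pose proof (Rle_abs B). pose proof (Rabs_pos B).
  destruct (pow_lt_1_zero (/ 2) ltac:(rewrite Rabs_pos_eq; lra) (eps / (Rabs B + 1)))
    as [J HJ].
  { apply Rdiv_lt_0_compat; lra. }
  exists (N0 + J)%nat. intros n Hn.
  destruct (Hu (n - N0)%nat) as [T [HTeq HTb]].
  replace (N0 + (n - N0))%nat with n in HTeq by lia.
  rewrite HTeq. replace (L - T - L) with (- T) by ring. rewrite Cmod_opp.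
  specialize (HJ (n - N0)%nat ltac:(lia)).
  rewrite Rabs_pos_eq in HJ by (apply pow_le; lra).
  pose proof (pow_le (/ 2) (n - N0) ltac:(lra)).
  apply (Rmult_lt_compat_r (Rabs B + 1)) in HJ; [|lra].
  unfold Rdiv in HJ. rewrite Rmult_assoc, Rinv_l, Rmult_1_r in HJ by lra.
  nra.
Qed.

(** * WZ summation *)

Section WZ_summation.

Variables F G : nat -> nat -> C.

Hypothesis wz_pair : forall n k, F (S n) k - F n k = G n (S k) - G n k.

Lemma wz_telescope_k (n K : nat) : psum (F (S n)) K - psum (F n) K = G n K - G n 0.
Proof.
  induction K as [|K IH]; simpl.
  - ring.
  - transitivity ((psum (F (S n)) K - psum (F n) K) + (F (S n) K - F n K)); [ring|].
    rewrite IH, wz_pair. ring.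
Qed.

Lemma wz_telescope (N K : nat) :
  psum (F 0) K = psum (F N) K + psum (fun n => G n 0) N - psum (fun n => G n K) N.
Proof.
  induction N as [|N IH]; simpl.
  - ring.
  - rewrite IH. pose proof (wz_telescope_k N K) as Hstep.
    replace (psum (F (S N)) K) with (psum (F N) K + (G N K - G N 0)); [ring|].
    rewrite <- Hstep. ring.
Qed.

Hypothesis G_vanishes : forall n, filterlim (G n) eventually (locally (0 : C)).

Lemma psum_G_vanishes (N : nat) :
  filterlim (fun K => psum (fun n => G n K) N) eventually (locally (0 : C)).
Proof.
  induction N as [|N IH]; simpl.
  - apply filterlim_const.
  - rewrite <- (Cplus_0_l 0). apply filterlim_C_plus; [exact IH|apply G_vanishes].
Qed.

Lemma wz_series_shift (N : nat) (T : C) :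
  is_series (F N) T -> is_series (F 0) (T + psum (fun n => G n 0) N).
Proof.
  intros HT.
  apply (filterlim_ext (fun K => psum (F N) (S K) + psum (fun n => G n 0) N
                                 + - psum (fun n => G n (S K)) N)).
  { intros K. rewrite sum_n_psum, (wz_telescope N). ring. }
  rewrite <- (Cplus_0_r (T + _)). apply filterlim_C_plus.
  - apply filterlim_C_plus; [|apply filterlim_const].
    apply (filterlim_ext (sum_n (F N))); [apply sum_n_psum|exact HT].
  - rewrite <- Copp_0.
    refine (filterlim_comp _ _ _ _ Copp _ _ _ _ (@filterlim_opp C_AbsRing C_NormedModule (0 : C))).
    exact (filterlim_comp _ _ _ S _ _ _ _ (eventually_subseq S (fun n => le_n _))
             (psum_G_vanishes N)).
Qed.

Variables (N0 : nat) (c : nat -> R) (c_sum : R).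

Hypothesis F_majorant : forall k, (Cmod (F N0 k) <= c k)%R.

Hypothesis c_series : is_series c c_sum.

Hypothesis F_halving : forall N k, (N0 <= N)%nat -> (Cmod (F (S N) k) <= / 2 * Cmod (F N k))%R.

Lemma F_geometric_majorant (j k : nat) : (Cmod (F (N0 + j) k) <= (/ 2) ^ j * c k)%R.
Proof.
  induction j as [|j IH].
  - rewrite Nat.add_0_r, pow_O, Rmult_1_l. apply F_majorant.
  - rewrite Nat.add_succ_r, <- tech_pow_Rmult, Rmult_assoc.
    eapply Rle_trans; [apply F_halving; lia|]. lra.
Qed.

Lemma F_series_geometric (j : nat) :
  exists T, is_series (F (N0 + j)) T /\ (Cmod T <= (/ 2) ^ j * c_sum)%R.
Proof.
  pose proof (F_geometric_majorant j) as Hj.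
  assert (Hc : is_series (fun k => (/ 2) ^ j * c k)%R ((/ 2) ^ j * c_sum)%R)
    by exact (is_series_scal _ _ _ c_series).
  destruct (@ex_series_le C_AbsRing C_CompleteNormedModule _ _ Hj (ex_intro _ _ Hc))
    as [T HT].
  exists T. split; [exact HT|]. exact (is_series_Cmod_le _ _ _ _ Hj HT Hc).
Qed.

Theorem wz_summation : exists L, is_series (F 0) L /\ is_series (fun n => G n 0) L.
Proof.
  destruct (F_series_geometric 0) as [T0 [HT0 _]]. rewrite Nat.add_0_r in HT0.
  set (L := T0 + psum (fun n => G n 0) N0).
  assert (HL : is_series (F 0) L) by exact (wz_series_shift N0 T0 HT0).
  exists L. split; [exact HL|].
  apply (filterlim_ext (fun n => psum (fun m => G m 0) (S n)));
    [intros n; symmetry; apply sum_n_psum|].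
  apply (filterlim_comp _ _ _ S _ _ _ _ (eventually_subseq S (fun n => le_n _))).
  apply (filterlim_of_geometric_remainder _ L N0 c_sum). intros j.
  destruct (F_series_geometric j) as [T [HT HTb]]. exists T. split; [|exact HTb].
  rewrite (filterlim_locally_unique _ _ _ HL (wz_series_shift _ _ HT)). ring.
Qed.

End WZ_summation.

(** * The WZ pair *)

Section WZ_pair.

Variables alpha a b : C.

Definition quartic (y : C) : C := (y * y - a * a) * (y * y - b * b).

Fixpoint quartic_prod (y : C) (m : nat) : C :=
  match m with O => 1 | S m' => quartic_prod y m' * quartic (y + RtoC (INR m')) end.

Definition pmpm_factor (m : C) : C := (m + a + b) * (m + a - b) * (m - a + b) * (m - a - b).

Definition wz_s (n : nat) : C :=
  RtoC ((-1) ^ n) * poch_pmpm 1 a b n / RtoC (Binomial.C (2 * n) n).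

Definition wz_ratio (n : nat) : C :=
  - (RtoC (INR n) + 1) * pmpm_factor (RtoC (INR n) + 1) / (2 * (2 * RtoC (INR n) + 1)).

Definition wz_num (n k : nat) : C := alpha + RtoC (INR k) + 3 * RtoC (INR n) / 2.

Definition wz_F (n k : nat) : C :=
  wz_s n * wz_num n k / quartic_prod (alpha + RtoC (INR (k + n))) (S n).

Definition wz_G (n k : nat) : C :=
  wz_s n / (4 * (2 * RtoC (INR n) + 1)) * qn (alpha + RtoC (INR k)) a b (S n)
  / quartic_prod (alpha + RtoC (INR (k + n))) (S (S n)).

Lemma quartic_prod_succ_l (y : C) (m : nat) :
  quartic_prod y (S m) = quartic y * quartic_prod (y + 1) m.
Proof.
  induction m as [|m IH].
  - simpl. rewrite Cplus_0_r. ring.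
  - change (quartic_prod y (S (S m))) with (quartic_prod y (S m) * quartic (y + RtoC (INR (S m)))).
    rewrite IH. simpl quartic_prod. rewrite RtoC_INR_S.
    replace (y + (RtoC (INR m) + 1)) with (y + 1 + RtoC (INR m)) by ring. ring.
Qed.

Lemma wz_s_0 : wz_s 0 = 1.
Proof.
  unfold wz_s, Binomial.C, poch_pmpm. simpl.
  replace (1 / (1 * 1))%R with 1%R by field. field.
Qed.

Lemma wz_s_succ (n : nat) : wz_s (S n) = wz_s n * wz_ratio n.
Proof.
  unfold wz_s, wz_ratio, poch_pmpm, pmpm_factor. simpl poch.
  rewrite binomial_central_succ, !RtoC_pow. simpl Cpow.
  pose proof (binomial_central_pos n).
  assert (RtoC (Binomial.C (2 * n) n) <> 0) by (apply RtoC_neq_0; lra).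
  pose proof (RtoC_INR_S_neq_0 n).
  pose proof (RtoC_affine_INR_neq_0 2 1 n ltac:(lra) ltac:(lra)).
  pose proof (RtoC_affine_INR_neq_0 2 2 n ltac:(lra) ltac:(lra)).
  field. repeat split; assumption.
Qed.

Lemma quartic_prod_F_den (k n : nat) :
  quartic_prod (alpha + RtoC (INR (k + n))) (S n) =
  quartic (alpha + RtoC (INR (k + n))) * quartic_prod (alpha + RtoC (INR (k + S n))) n.
Proof.
  rewrite quartic_prod_succ_l.
  replace (alpha + RtoC (INR (k + n)) + 1) with (alpha + RtoC (INR (k + S n)))
    by (rewrite !RtoC_INR_plus, RtoC_INR_S; ring).
  reflexivity.
Qed.

Lemma quartic_prod_F_den_succ (k n : nat) :
  quartic_prod (alpha + RtoC (INR (k + S n))) (S (S n)) =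
  quartic_prod (alpha + RtoC (INR (k + S n))) n * quartic (alpha + RtoC (INR (k + S n + n)))
  * quartic (alpha + RtoC (INR (k + S n + S n))).
Proof. cbn [quartic_prod]. rewrite <- !Cplus_assoc, <- !RtoC_INR_plus. ring. Qed.

Lemma quartic_prod_G_den (k n : nat) :
  quartic_prod (alpha + RtoC (INR (k + n))) (S (S n)) =
  quartic (alpha + RtoC (INR (k + n))) * quartic_prod (alpha + RtoC (INR (k + S n))) n
  * quartic (alpha + RtoC (INR (k + S n + n))).
Proof.
  rewrite quartic_prod_succ_l. cbn [quartic_prod].
  replace (alpha + RtoC (INR (k + n)) + 1) with (alpha + RtoC (INR (k + S n)))
    by (rewrite !RtoC_INR_plus, RtoC_INR_S; ring).
  rewrite <- Cplus_assoc, <- RtoC_INR_plus. ring.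
Qed.

Hypothesis no_pole : forall m : nat, quartic (alpha + RtoC (INR m)) <> 0.

Lemma quartic_prod_neq_0 (m len : nat) : quartic_prod (alpha + RtoC (INR m)) len <> 0.
Proof.
  induction len as [|len IH]; simpl.
  - exact C1_nz.
  - apply Cmult_neq_0; [exact IH|].
    rewrite <- Cplus_assoc, <- RtoC_INR_plus. apply no_pole.
Qed.

Lemma wz_pair_identity (n k : nat) :
  wz_F (S n) k - wz_F n k = wz_G n (S k) - wz_G n k.
Proof.
  unfold wz_F, wz_G.
  replace (S k + n)%nat with (k + S n)%nat by lia.
  rewrite quartic_prod_F_den_succ, quartic_prod_G_den, quartic_prod_F_den, wz_s_succ.
  set (M := quartic_prod (alpha + RtoC (INR (k + S n))) n).
  assert (M <> 0) by apply quartic_prod_neq_0.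
  pose proof (no_pole (k + n)). pose proof (no_pole (k + S n + n)).
  pose proof (no_pole (k + S n + S n)).
  pose proof (RtoC_affine_INR_neq_0 2 1 n ltac:(lra) ltac:(lra)).
  set (Q0 := quartic (alpha + RtoC (INR (k + n)))) in *.
  set (Q2 := quartic (alpha + RtoC (INR (k + S n + n)))) in *.
  set (Q3 := quartic (alpha + RtoC (INR (k + S n + S n)))) in *.
  unfold wz_ratio, wz_num.
  field_simplify_eq; [| repeat split; assumption].
  unfold Q0, Q2, Q3, quartic, qn, pmpm_factor. rewrite !RtoC_INR_plus, !RtoC_INR_S. ring.
Qed.

Lemma poch_pm_quartic_prod (n m : nat) :
  poch_pm alpha a (n + m) * poch_pm alpha b (n + m) =
  poch_pm alpha a n * poch_pm alpha b n * quartic_prod (alpha + RtoC (INR n)) m.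
Proof.
  induction m as [|m IH].
  - rewrite Nat.add_0_r. simpl. ring.
  - rewrite Nat.add_succ_r. unfold poch_pm in *. cbn [poch quartic_prod].
    transitivity (poch (alpha + a) (n + m) * poch (alpha - a) (n + m) *
       (poch (alpha + b) (n + m) * poch (alpha - b) (n + m)) *
       ((alpha + a + RtoC (INR (n + m))) * (alpha - a + RtoC (INR (n + m))) *
        (alpha + b + RtoC (INR (n + m))) * (alpha - b + RtoC (INR (n + m))))); [ring|].
    rewrite IH. unfold quartic. rewrite RtoC_INR_plus. ring.
Qed.

Lemma wz_F_0 (k : nat) : wz_F 0 k = lhs_term alpha a b k.
Proof.
  unfold wz_F, wz_num, lhs_term. rewrite wz_s_0. cbn [quartic_prod].
  rewrite Nat.add_0_r. simpl (RtoC (INR 0)). rewrite Cplus_0_r.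
  pose proof (no_pole k) as Hk. unfold quartic in *.
  replace (RtoC (INR k) + alpha) with (alpha + RtoC (INR k)) by ring.
  field. split; intro E; apply Hk; rewrite E; ring.
Qed.

Lemma wz_G_0 (n : nat) : wz_G n 0 = rhs_term alpha a b (S n) / 2.
Proof.
  unfold wz_G, rhs_term, wz_s.
  replace (S n - 1)%nat with n by lia.
  rewrite binomial_central_succ.
  replace (2 * S n)%nat with (n + S (S n))%nat by lia.
  rewrite Nat.add_0_l, RtoC_INR_S, !RtoC_pow.
  simpl (RtoC (INR 0)). rewrite Cplus_0_r.
  set (X := (RtoC (INR n) + 1) * _).
  replace (X * poch_pm alpha a (n + S (S n)) * poch_pm alpha b (n + S (S n))) with
    (X * (poch_pm alpha a (n + S (S n)) * poch_pm alpha b (n + S (S n)))) by ring.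
  rewrite poch_pm_quartic_prod. unfold X.
  pose proof (binomial_central_pos n).
  assert (RtoC (Binomial.C (2 * n) n) <> 0) by (apply RtoC_neq_0; lra).
  pose proof (RtoC_INR_S_neq_0 n).
  pose proof (RtoC_affine_INR_neq_0 2 1 n ltac:(lra) ltac:(lra)).
  pose proof (RtoC_affine_INR_neq_0 2 2 n ltac:(lra) ltac:(lra)).
  pose proof (quartic_prod_neq_0 n (S (S n))).
  assert (Hp : poch_pm alpha a n * poch_pm alpha b n <> 0).
  { pose proof (poch_pm_quartic_prod 0 n) as E. simpl (0 + n)%nat in E. rewrite E.
    unfold poch_pm. simpl poch. rewrite !Cmult_1_l. apply quartic_prod_neq_0. }
  field. repeat split; try assumption; intro E; apply Hp; rewrite E; ring.
Qed.

(** * Estimates for the WZ pair *)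

Definition radius : R := Cmod alpha + Cmod a + Cmod b.

Lemma radius_nonneg : (0 <= radius)%R.
Proof.
  unfold radius. pose proof (Cmod_ge_0 alpha). pose proof (Cmod_ge_0 a).
  pose proof (Cmod_ge_0 b). lra.
Qed.

Lemma radius_bounds :
  (Cmod alpha <= radius /\ Cmod (alpha + a) <= radius /\ Cmod (alpha - a) <= radius /\
   Cmod (alpha + b) <= radius /\ Cmod (alpha - b) <= radius)%R.
Proof.
  unfold radius. pose proof (Cmod_ge_0 a). pose proof (Cmod_ge_0 b).
  pose proof (Cmod_triangle alpha a). pose proof (Cmod_minus_le alpha a).
  pose proof (Cmod_triangle alpha b). pose proof (Cmod_minus_le alpha b). lra.
Qed.

Lemma quartic_shift (z : C) :
  quartic (alpha + z) = (alpha + a + z) * (alpha - a + z) * (alpha + b + z) * (alpha - b + z).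
Proof. unfold quartic. ring. Qed.

Lemma quartic_norm_ge (t : R) :
  (radius <= t)%R -> ((t - radius) ^ 4 <= Cmod (quartic (alpha + RtoC t)))%R.
Proof.
  intros Ht. rewrite quartic_shift, !Cmod_mult.
  destruct radius_bounds as (_ & h1 & h2 & h3 & h4).
  replace ((t - radius) ^ 4)%R with
    ((t - radius) * (t - radius) * (t - radius) * (t - radius))%R by ring.
  apply Rmult4_le_compat; try lra; apply Cmod_plus_real_ge; assumption.
Qed.

Lemma quartic_norm_mono (t0 t1 : R) : (0 <= t0)%R -> (t0 + 2 * radius <= t1)%R ->
  (Cmod (quartic (alpha + RtoC t0)) <= Cmod (quartic (alpha + RtoC t1)))%R.
Proof.
  intros H0 H1. rewrite !quartic_shift, !Cmod_mult.
  destruct radius_bounds as (_ & h1 & h2 & h3 & h4).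
  apply Rmult4_le_compat; try apply Cmod_ge_0;
    (eapply Rle_trans; [apply Cmod_plus_real_le; eauto|];
     eapply Rle_trans; [|apply Cmod_plus_real_ge; eauto]; lra).
Qed.

Lemma pmpm_factor_norm_le (t : R) :
  (0 <= t)%R -> (Cmod (pmpm_factor (RtoC t)) <= (t + radius) ^ 4)%R.
Proof.
  intros Ht. unfold pmpm_factor.
  replace (RtoC t + a + b) with ((a + b) + RtoC t) by ring.
  replace (RtoC t + a - b) with ((a - b) + RtoC t) by ring.
  replace (RtoC t - a + b) with ((- a + b) + RtoC t) by ring.
  replace (RtoC t - a - b) with ((- a - b) + RtoC t) by ring.
  rewrite !Cmod_mult.
  replace ((t + radius) ^ 4)%R with
    ((t + radius) * (t + radius) * (t + radius) * (t + radius))%R by ring.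
  unfold radius. pose proof (Cmod_ge_0 alpha).
  pose proof (Cmod_triangle a b). pose proof (Cmod_minus_le a b).
  pose proof (Cmod_triangle (- a) b). pose proof (Cmod_minus_le (- a) b).
  rewrite Cmod_opp in *.
  apply Rmult4_le_compat; try apply Cmod_ge_0; apply Cmod_plus_real_le; auto; lra.
Qed.

Lemma quartic_prod_norm_ge_1 (m len : nat) : (radius + 1 <= INR m)%R ->
  (1 <= Cmod (quartic_prod (alpha + RtoC (INR m)) len))%R.
Proof.
  intros Hm. induction len as [|len IH]; cbn [quartic_prod].
  - rewrite Cmod_1. lra.
  - rewrite Cmod_mult, <- Cplus_assoc, <- RtoC_INR_plus.
    assert (1 <= Cmod (quartic (alpha + RtoC (INR (m + len)))))%R.
    { eapply Rle_trans; [|apply quartic_norm_ge]; rewrite plus_INR; pose proof (pos_INR len).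
      - apply pow_R1_Rle. lra.
      - lra. }
    nra.
Qed.

Lemma wz_num_real (N k : nat) : wz_num N k = alpha + RtoC (INR k + 3 * INR N / 2).
Proof. unfold wz_num. rewrite RtoC_plus, RtoC_div, RtoC_mult by lra. ring. Qed.

Lemma wz_F_majorant (N : nat) : (radius + 2 <= INR N)%R -> forall k,
  (Cmod (wz_F N k) <= Cmod (wz_s N) * (Cmod alpha + 3 * INR N / 2 + 1) * inv_consec k)%R.
Proof.
  intros HN k. pose proof radius_nonneg. pose proof (pos_INR k).
  unfold wz_F. rewrite quartic_prod_F_den.
  pose proof (no_pole (k + N)). pose proof (quartic_prod_neq_0 (k + S N) N).
  rewrite Cmod_div by (apply Cmult_neq_0; assumption).
  rewrite !Cmod_mult, wz_num_real. unfold Rdiv, inv_consec.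
  rewrite !(Rmult_assoc (Cmod (wz_s N))).
  apply Rmult_le_compat_l; [apply Cmod_ge_0|].
  apply inv_consec_bound; try lra; try apply Cmod_ge_0.
  - eapply Rle_trans; [apply Cmod_plus_real_le; [apply Rle_refl|]|].
    + pose proof (pos_INR N). lra.
    + pose proof (Cmod_ge_0 alpha). pose proof (pos_INR N). nra.
  - eapply Rle_trans; [|apply quartic_norm_ge]; rewrite plus_INR.
    + apply pow_incr. lra.
    + lra.
  - apply quartic_prod_norm_ge_1. rewrite plus_INR, S_INR. lra.
Qed.

Lemma wz_ratio_norm_le (N : nat) : (Cmod (wz_ratio N) <= / 2 * (INR N + 1 + radius) ^ 4)%R.
Proof.
  pose proof (pos_INR N). pose proof radius_nonneg.
  assert (E : wz_ratio N =
              - RtoC ((INR N + 1) / (2 * (2 * INR N + 1))) * pmpm_factor (RtoC (INR N + 1))).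
  { unfold wz_ratio. pose proof (RtoC_affine_INR_neq_0 2 1 N ltac:(lra) ltac:(lra)).
    rewrite RtoC_div by lra. repeat rewrite ?RtoC_plus, ?RtoC_mult. field. assumption. }
  rewrite E, Cmod_mult, Cmod_opp, Cmod_R, Rabs_pos_eq by (apply Rdiv_le_0_compat; lra).
  apply Rmult_le_compat; [apply Rdiv_le_0_compat; lra|apply Cmod_ge_0| |].
  - apply (Rmult_le_reg_r (2 * (2 * INR N + 1))); [lra|].
    unfold Rdiv. rewrite Rmult_assoc, Rinv_l by lra. lra.
  - apply pmpm_factor_norm_le. lra.
Qed.

Lemma wz_num_succ_le (N k : nat) : (radius + 1 <= INR N)%R ->
  (Cmod (wz_num (S N) k) <= 2 * Cmod (wz_num N k))%R.
Proof.
  intros HN. destruct radius_bounds as [Ha _]. pose proof (pos_INR k). pose proof (Cmod_ge_0 alpha).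
  replace (wz_num (S N) k) with (wz_num N k + RtoC (3 / 2))
    by (unfold wz_num; rewrite RtoC_INR_S, RtoC_div by lra; field).
  assert (3 / 2 <= Cmod (wz_num N k))%R.
  { rewrite wz_num_real.
    eapply Rle_trans; [|apply Cmod_plus_real_ge with (c := Cmod alpha); apply Rle_refl].
    lra. }
  eapply Rle_trans; [apply Cmod_triangle|]. rewrite Cmod_R, Rabs_pos_eq; lra.
Qed.

Lemma wz_F_halving (N k : nat) : (5 * radius + 2 <= INR N)%R ->
  (Cmod (wz_F (S N) k) <= / 2 * Cmod (wz_F N k))%R.
Proof.
  intros HN. pose proof radius_nonneg. pose proof (pos_INR k). pose proof (pos_INR N).
  unfold wz_F. rewrite quartic_prod_F_den_succ, quartic_prod_F_den, wz_s_succ.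
  set (M := quartic_prod (alpha + RtoC (INR (k + S N))) N).
  assert (M <> 0) by apply quartic_prod_neq_0.
  pose proof (no_pole (k + N)). pose proof (no_pole (k + S N + N)).
  pose proof (no_pole (k + S N + S N)).
  set (Q0 := quartic (alpha + RtoC (INR (k + N)))) in *.
  set (Q2 := quartic (alpha + RtoC (INR (k + S N + N)))) in *.
  set (Q3 := quartic (alpha + RtoC (INR (k + S N + S N)))) in *.
  rewrite !Cmod_div by (repeat (apply Cmult_neq_0; [|assumption]); assumption).
  rewrite !Cmod_mult.
  apply halving_combine with (P := ((INR N + 1 + radius) ^ 4)%R)
                             (Z := ((2 * INR N + 2 - radius) ^ 4)%R);
    try apply Cmod_ge_0; try (apply Cmod_gt_0; assumption).
  - apply pow_lt. lra.
  - eapply Rle_trans; [apply wz_ratio_norm_le|]. lra.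
  - apply wz_num_succ_le. lra.
  - apply quartic_norm_mono; rewrite !plus_INR; [lra|]. rewrite S_INR. lra.
  - eapply Rle_trans; [|apply quartic_norm_ge]; rewrite !plus_INR, !S_INR.
    + apply pow_incr. lra.
    + lra.
  - apply quartic_halving_margin; lra.
Qed.

(* Splitting q along the outer factors Q(x+n), Q(x+2n+1) of the denominator of G
   leaves numerators of degree 1 and 2, whence G(n,K) = O(1/K). *)
Lemma qn_split (x : C) (n : nat) :
  qn x a b (S n) =
  2 * (2 * RtoC (INR n) + 1) * (3 * RtoC (INR n) + 2 * x) * quartic (x + (2 * RtoC (INR n) + 1))
  + quartic (x + RtoC (INR n)) *
    (2 * x * x + (10 * RtoC (INR n) + 6) * x
     + (13 * (RtoC (INR n) + 1) * (RtoC (INR n) + 1) - 10 * (RtoC (INR n) + 1) + 2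
        - a * a - b * b)).
Proof. unfold qn, quartic. rewrite RtoC_INR_S. ring. Qed.

Lemma wz_G_split (n K : nat) :
  let v := RtoC (INR n) in
  let x := alpha + RtoC (INR K) in
  wz_G n K =
  wz_s n / (4 * (2 * v + 1)) *
  (((2 * (2 * v + 1) * (3 * v + 2 * alpha) + 4 * (2 * v + 1) * RtoC (INR K))
      * quartic (alpha + RtoC (INR (K + S n + n)))
    + quartic (alpha + RtoC (INR (K + n)))
      * (2 * x * x + (10 * v + 6) * x
         + (13 * (v + 1) * (v + 1) - 10 * (v + 1) + 2 - a * a - b * b)))
   / (quartic (alpha + RtoC (INR (K + n))) * quartic_prod (alpha + RtoC (INR (K + S n))) n
      * quartic (alpha + RtoC (INR (K + S n + n))))).
Proof.
  intros v x. unfold wz_G. rewrite quartic_prod_G_den, qn_split. fold v.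
  replace (alpha + RtoC (INR K) + (2 * v + 1)) with (alpha + RtoC (INR (K + S n + n)))
    by (unfold v; rewrite !RtoC_INR_plus, RtoC_INR_S; ring).
  replace (alpha + RtoC (INR K) + v) with (alpha + RtoC (INR (K + n)))
    by (unfold v; rewrite RtoC_INR_plus; ring).
  unfold x, Cdiv. ring.
Qed.

Lemma wz_G_decay (n : nat) : exists B, forall K, (2 * radius + 2 <= INR K)%R ->
  (Cmod (wz_G n K) <= B / (INR K + 1))%R.
Proof.
  set (v := RtoC (INR n)).
  set (p := 2 * (2 * v + 1) * (3 * v + 2 * alpha)).
  set (q := 4 * (2 * v + 1)).
  set (c0 := 13 * (v + 1) * (v + 1) - 10 * (v + 1) + 2 - a * a - b * b).
  set (A := (Cmod alpha + Cmod 1)%R).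
  set (E2 := (Cmod 2 * A ^ 2 + Cmod (10 * v + 6) * A + Cmod c0)%R).
  set (coef := wz_s n / (4 * (2 * v + 1))).
  exists (Cmod coef * (16 * (Cmod p + Cmod q) + 16 * E2))%R.
  intros K HK. pose proof radius_nonneg. pose proof (pos_INR n). pose proof (pos_INR K).
  rewrite wz_G_split. fold v p q c0 coef. rewrite Cmod_mult.
  replace (Cmod coef * (16 * (Cmod p + Cmod q) + 16 * E2) / (INR K + 1))%R
    with (Cmod coef * (16 * (Cmod p + Cmod q) / (INR K + 1) + 16 * E2 / (INR K + 1)))%R
    by (field; lra).
  apply Rmult_le_compat_l; [apply Cmod_ge_0|].
  apply Cmod_split_ratio_le; [lra| | | | |].
  - rewrite pow_1. apply Cmod_affine_le. lra.
  - apply Cmod_quadratic_le; [lra|].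
    rewrite <- (Cmult_1_l (RtoC (INR K))). apply Cmod_affine_le. lra.
  - eapply Rle_trans; [|apply quartic_norm_ge]; rewrite plus_INR.
    + apply pow_incr. lra.
    + lra.
  - eapply Rle_trans; [|apply quartic_norm_ge]; rewrite !plus_INR, S_INR.
    + apply pow_incr. lra.
    + lra.
  - apply quartic_prod_norm_ge_1. rewrite plus_INR, S_INR. lra.
Qed.

Lemma wz_G_vanishes (n : nat) : filterlim (wz_G n) eventually (locally (0 : C)).
Proof.
  destruct (wz_G_decay n) as [B HB].
  apply filterlim_C_seq_spec. intros eps Heps.
  destruct (INR_archimed 1 (2 * radius + 2) ltac:(lra)) as [K1 HK1].
  destruct (INR_archimed eps B Heps) as [K2 HK2].
  exists (K1 + K2)%nat. intros K HK. replace (wz_G n K - 0) with (wz_G n K) by ring.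
  apply le_INR in HK. rewrite plus_INR in HK.
  pose proof (pos_INR K1). pose proof (pos_INR K2).
  eapply Rle_lt_trans; [apply HB; lra|].
  apply (Rmult_lt_reg_r (INR K + 1)); [lra|].
  unfold Rdiv. rewrite Rmult_assoc, Rinv_l, Rmult_1_r by lra. nra.
Qed.

End WZ_pair.

Lemma shift_neq_0_of_not_nonpos_int (u : C) (m : nat) : ~ nonpos_int u -> u + RtoC (INR m) <> 0.
Proof.
  intros Hu E. apply Hu. exists m. rewrite RtoC_opp.
  replace u with (u + RtoC (INR m) - RtoC (INR m)) by ring. rewrite E. ring.
Qed.

Lemma quartic_shift_neq_0 (alpha a b : C) :
  ~ nonpos_int (alpha + a) -> ~ nonpos_int (alpha - a) ->
  ~ nonpos_int (alpha + b) -> ~ nonpos_int (alpha - b) ->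
  forall m : nat, quartic a b (alpha + RtoC (INR m)) <> 0.
Proof.
  intros h1 h2 h3 h4 m. rewrite quartic_shift.
  repeat apply Cmult_neq_0; apply shift_neq_0_of_not_nonpos_int; assumption.
Qed.

Theorem theorem4 (alpha a b : C) :
  ~ nonpos_int (alpha + a) -> ~ nonpos_int (alpha - a) ->
  ~ nonpos_int (alpha + b) -> ~ nonpos_int (alpha - b) ->
  exists L : C,
    is_series (lhs_term alpha a b) L /\
    is_series (fun n : nat => rhs_term alpha a b (S n) / 2) L.
Proof.
  intros h1 h2 h3 h4.
  pose proof (quartic_shift_neq_0 alpha a b h1 h2 h3 h4) as no_pole.
  destruct (INR_archimed 1 (5 * radius alpha a b + 2) ltac:(lra)) as [N0 HN0].
  pose proof (radius_nonneg alpha a b).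
  set (D := (Cmod (wz_s a b N0) * (Cmod alpha + 3 * INR N0 / 2 + 1))%R).
  destruct (wz_summation (wz_F alpha a b) (wz_G alpha a b)
              (wz_pair_identity alpha a b no_pole) (wz_G_vanishes alpha a b)
              N0 (fun k => D * inv_consec k)%R D)
    as [L [HF HG]].
  - apply wz_F_majorant; [exact no_pole|lra].
  - pose proof (is_series_scal_r D _ _ is_series_inv_consec) as Hc.
    rewrite Rmult_1_l in Hc. exact (is_series_ext _ _ _ (fun k => Rmult_comm _ _) Hc).
  - intros N k HN. apply wz_F_halving; [exact no_pole|].
    apply le_INR in HN. lra.
  - exists L. split.
    + exact (is_series_ext _ _ _ (wz_F_0 alpha a b no_pole) HF).
    + exact (is_series_ext _ _ _ (wz_G_0 alpha a b no_pole) HG).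
Qed.
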